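(* Let $\beta>0$, $\lambda_p,\lambda_k\in\mathbb R$, and let $s_1,\dots,s_n\in\{\pm1\}$ be a nonconstant sign pattern, $S_\pm=\{i:s_i=\pm1\}$, $n_\pm=|S_\pm|$. Let $K^*_{ij}=a_+$ for $i,j\in S_+$, $b_+$ for $i\in S_+,j\in S_-$, $b_-$ for $i\in S_-,j\in S_+$, $a_-$ for $i,j\in S_-$, where \[ a_+=\frac{e^{\beta\lambda_p}}{n_+e^{\beta\lambda_p}+n_-e^{-\beta\lambda_p}},\ b_+=\frac{e^{-\beta\lambda_p}}{n_+e^{\beta\lambda_p}+n_-e^{-\beta\lambda_p}},\ a_-=\frac{e^{\beta\lambda_p}}{n_-e^{\beta\lambda_p}+n_+e^{-\beta\lambda_p}},\ b_-=\frac{e^{-\beta\lambda_p}}{n_-e^{\beta\lambda_p}+n_+e^{-\beta\lambda_p}}, \] and let $\gamma_i=\lambda_ps_i\sum_jK^*_{ij}s_j$ (so $\gamma_i=\gamma_+:=\lambda_p(n_+a_+-n_-b_+)$ on $S_+$ and $\gamma_i=\gamma_-:=\lambda_p(n_-a_--n_+b_-)$ on $S_-$). Define $L_k:\mathbb R^n\to\mathbb R^n$ by $(L_kz)_i=-\gamma_iz_i+\lambda_k\sum_{j=1}^nK^*_{ij}z_j$. Then $\mathbb R^n=V_+\oplus V_-\oplus V_{\mathrm{mean}}$, where \[ V_\pm=\Big\{z: z_i=0\ \text{for } i\in S_\mp,\ \sum_{i\in S_\pm}z_i=0\Big\},\qquad V_{\mathrm{mean}}=\{z: z\text{ is constant on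 }S_+\text{ and constant on }S_-\}, \] and each of $V_+,V_-,V_{\mathrm{mean}}$ is invariant under $L_k$.
   Context: $L_k$ is the modewise (transverse direction $e_k$, $k\ne p$) linearization of the symmetric self-attention dynamics at the sign-split pure-mode equilibrium $x_i^*=s_ie_p$, where $\lambda_p,\lambda_k$ are eigenvalues of the symmetric interaction matrix. *)

From HB Require Import structures.
From mathcomp Require Import all_boot all_order all_algebra.
From mathcomp Require Import all_classical all_reals all_analysis.
Set Implicit Arguments. Unset Strict Implicit. Unset Printing Implicit Defensive.
Import Order.TTheory GRing.Theory Num.Theory.
Local Open Scope ring_scope.

Section Defs.
Variables (R : realType) (n : nat) (beta lp : R) (s : 'I_n -> R).

Definition Splus : {set 'I_n} := [set i | s i == 1].
Definition Sminus : {set 'I_n} := [set i | s i == -1].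
Definition nplus : R := (#|Splus|)%:R.
Definition nminus : R := (#|Sminus|)%:R.

Definition aplus : R :=
  expR (beta * lp) / (nplus * expR (beta * lp) + nminus * expR (- (beta * lp))).
Definition bplus : R :=
  expR (- (beta * lp)) / (nplus * expR (beta * lp) + nminus * expR (- (beta * lp))).
Definition aminus : R :=
  expR (beta * lp) / (nminus * expR (beta * lp) + nplus * expR (- (beta * lp))).
Definition bminus : R :=
  expR (- (beta * lp)) / (nminus * expR (beta * lp) + nplus * expR (- (beta * lp))).

Definition Kstar (i j : 'I_n) : R :=
  if i \in Splus then (if j \in Splus then aplus else bplus)
  else (if j \in Splus then bminus else aminus).

Definition gammaA (i : 'I_n) : R := lp * s i * \sum_j Kstar i j * s j.

Definition Lk (lk : R) (z : 'rV[R]_n) : 'rV[R]_n :=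
  \row_i (- gammaA i * z 0 i + lk * \sum_j Kstar i j * z 0 j).

Definition Vplus (z : 'rV[R]_n) : Prop :=
  (forall i, i \in Sminus -> z 0 i = 0) /\ \sum_(i in Splus) z 0 i = 0.
Definition Vminus (z : 'rV[R]_n) : Prop :=
  (forall i, i \in Splus -> z 0 i = 0) /\ \sum_(i in Sminus) z 0 i = 0.
Definition Vmean (z : 'rV[R]_n) : Prop :=
  (forall i j, i \in Splus -> j \in Splus -> z 0 i = z 0 j) /\
  (forall i j, i \in Sminus -> j \in Sminus -> z 0 i = z 0 j).
End Defs.

Definition direct_sum3 (R : realType) (n : nat) (A B C : 'rV[R]_n -> Prop) : Prop :=
  (forall z, exists u v w, [/\ A u, B v, C w & z = u + v + w]) /\
  (forall u v w u' v' w', A u -> B v -> C w -> A u' -> B v' -> C w' ->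
     u + v + w = u' + v' + w' -> [/\ u = u', v = v' & w = w']).

(** [K*] is constant on the four blocks [S_a x S_b] and [gamma] on [S_+] and
   [S_-].  Hence on a vector supported in one block with zero sum the kernel
   term vanishes and [L_k] acts as multiplication by [-gamma], while blockwise
   constant vectors are mapped to blockwise constant vectors.  The
   decomposition splits a vector into its block means and the deviations from
   them; it is direct because a blockwise constant vector with zero sum over a
   nonempty block vanishes on that block. *)

From HB Require Import structures.
From mathcomp Require Import all_boot all_order all_algebra.
From mathcomp Require Import all_classical all_reals all_analysis.
Set Implicit Arguments. Unset Strict Implicit. Unset Printing Implicit Defensive.
Import Order.TTheory GRing.Theory Num.Theory.
Local Open Scope ring_scope.

Section TwoBlocks.
Variables (R : numFieldType) (n : nat).
Implicit Types (A : {set 'I_n}) (z u v w : 'rV[R]_n).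

Definition block_constant (T : Type) A (f : 'I_n -> T) :=
  forall i j, (i \in A) = (j \in A) -> f i = f j.

Definition zero_sum_on A z :=
  (forall i, i \notin A -> z 0 i = 0) /\ \sum_(i in A) z 0 i = 0.

Definition mean_on A (f : 'I_n -> R) := (\sum_(i in A) f i) / #|A|%:R.

Definition block_mean A z :=
  \row_i (if i \in A then mean_on A (z 0) else mean_on (~: A) (z 0)).

Definition restrict A z := \row_i (if i \in A then z 0 i else 0).

Definition block_operator (d : 'I_n -> R) (K : 'I_n -> 'I_n -> R) z :=
  \row_i (d i * z 0 i + \sum_j K i j * z 0 j).

Lemma block_constantC (T : Type) A (f : 'I_n -> T) :
  block_constant A f -> block_constant (~: A) f.
Proof. by move=> cf i j; rewrite !finset.in_setC => /negb_inj; apply: cf. Qed.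

Lemma sum_block_constant_mul A f (g : 'I_n -> R) :
  block_constant A f -> \sum_(i in A) g i = 0 -> \sum_(i in A) f i * g i = 0.
Proof.
move=> cf sg; have [->|[i0 i0A]] := set_0Vmem A; first by rewrite big_set0.
rewrite (eq_bigr (fun i => f i0 * g i)) => [|i iA]; last by rewrite (cf i i0) // iA i0A.
by rewrite -mulr_sumr sg mulr0.
Qed.

Lemma sum_sub_mean_on A f : \sum_(i in A) (f i - mean_on A f) = 0.
Proof.
rewrite sumrB sumr_const; have [A0|A0] := eqVneq #|A| 0%N.
  by rewrite A0 mulr0n big_pred0 ?subrr // => i; exact: card0_eq.
by rewrite -mulr_natr divfK ?subrr // pnatr_eq0.
Qed.

Lemma block_meanC A z : block_mean (~: A) z = block_mean A z.
Proof.
by apply/rowP => i; rewrite !mxE finset.setCK finset.in_setC; case: (i \in A).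
Qed.

Lemma block_constant_block_mean A z : block_constant A (block_mean A z 0).
Proof. by move=> i j eij; rewrite !mxE eij. Qed.

Lemma zero_sum_on_restrict_sub_mean A z :
  zero_sum_on A (restrict A (z - block_mean A z)).
Proof.
split=> [i /negbTE iA|]; first by rewrite mxE iA.
rewrite -[RHS](sum_sub_mean_on A (z 0)); apply: eq_bigr => i iA.
by rewrite !mxE iA.
Qed.

Lemma restrict_addC A z : restrict A z + restrict (~: A) z = z.
Proof.
apply/rowP => i; rewrite !mxE finset.in_setC.
by case: (i \in A); rewrite ?addr0 ?add0r.
Qed.

Lemma block_decomposition A z : exists u v w,
  [/\ zero_sum_on A u, zero_sum_on (~: A) v, block_constant A (w 0)
    & z = u + v + w].
Proof.
pose y := z - block_mean A z.
exists (restrict A y), (restrict (~: A) y), (block_mean A z); split.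
- exact: zero_sum_on_restrict_sub_mean.
- by rewrite /y -(block_meanC A); exact: zero_sum_on_restrict_sub_mean.
- exact: block_constant_block_mean.
- by rewrite restrict_addC subrK.
Qed.

Lemma zero_sum_onB A u v :
  zero_sum_on A u -> zero_sum_on A v -> zero_sum_on A (u - v).
Proof.
move=> [u0 su] [v0 sv]; split=> [i iA|]; first by rewrite !mxE u0 ?v0 ?subrr.
rewrite (eq_bigr (fun i => u 0 i - v 0 i)) => [|i _]; last by rewrite !mxE.
by rewrite sumrB su sv subrr.
Qed.

Lemma block_constantB A u v :
  block_constant A (u 0) -> block_constant A (v 0) ->
  block_constant A ((u - v) 0).
Proof. by move=> cu cv i j eij; rewrite !mxE (cu i j) ?(cv i j). Qed.

(* Summing [u + w = 0] over the block [A] gives [#|A| * w_i = 0]. *)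
Lemma zero_sum_add_block_constant A u w :
  zero_sum_on A u -> block_constant A (w 0) ->
  (forall i, i \in A -> u 0 i + w 0 i = 0) -> forall i, i \in A -> w 0 i = 0.
Proof.
move=> [_ su] cw uw i iA.
have : \sum_(j in A) w 0 j = 0 by rewrite -[LHS]add0r -{1}su -big_split big1.
rewrite (eq_bigr (fun=> w 0 i)) => [|j jA]; last by apply: cw; rewrite iA jA.
rewrite sumr_const => /eqP; rewrite mulrn_eq0 => /orP[|/eqP //].
by move=> /eqP/card0_eq/(_ i); rewrite iA inE.
Qed.

Lemma block_decomposition_eq0 A u v w :
  zero_sum_on A u -> zero_sum_on (~: A) v -> block_constant A (w 0) ->
  u + v + w = 0 -> [/\ u = 0, v = 0 & w = 0].
Proof.
move=> zu zv cw /rowP uvw.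
have uvw_i i : u 0 i + v 0 i + w 0 i = 0 by have := uvw i; rewrite !mxE.
have v0 i : i \in A -> v 0 i = 0.
  by move=> iA; apply: zv.1; rewrite finset.in_setC iA.
have u0 i : i \in ~: A -> u 0 i = 0 by rewrite finset.in_setC; apply: zu.1.
have wA : forall i, i \in A -> w 0 i = 0.
  apply: (zero_sum_add_block_constant zu cw) => i iA.
  by rewrite -(uvw_i i) v0 ?addr0.
have wAC : forall i, i \in ~: A -> w 0 i = 0.
  apply: (zero_sum_add_block_constant zv (block_constantC cw)) => i iA.
  by rewrite -(uvw_i i) u0 ?add0r.
have w0 i : w 0 i = 0.
  by case: (boolP (i \in A)) => [/wA|]; last by rewrite -finset.in_setC => /wAC.
have u0' i : u 0 i = 0.
  case: (boolP (i \in A)) => [iA|]; last by rewrite -finset.in_setC => /u0.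
  by have := uvw_i i; rewrite v0 // w0 !addr0.
split; apply/rowP => i; rewrite mxE ?w0 ?u0' //.
by have := uvw_i i; rewrite u0' w0 add0r addr0.
Qed.

Lemma block_decomposition_unique A u v w u' v' w' :
  zero_sum_on A u -> zero_sum_on (~: A) v -> block_constant A (w 0) ->
  zero_sum_on A u' -> zero_sum_on (~: A) v' -> block_constant A (w' 0) ->
  u + v + w = u' + v' + w' -> [/\ u = u', v = v' & w = w'].
Proof.
move=> zu zv cw zu' zv' cw' e.
have [] := block_decomposition_eq0 (zero_sum_onB zu zu') (zero_sum_onB zv zv')
  (block_constantB cw cw').
  by rewrite [u - u' + _]addrACA -opprD addrACA -opprD e subrr.
by move=> /subr0_eq -> /subr0_eq -> /subr0_eq ->.
Qed.

Section BlockOperator.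
Variables (d : 'I_n -> R) (K : 'I_n -> 'I_n -> R).

Lemma zero_sum_on_block_operator A :
  block_constant A d -> (forall i, block_constant A (K i)) ->
  forall z, zero_sum_on A z -> zero_sum_on A (block_operator d K z).
Proof.
move=> cd cK z [z0 sz].
have Kz i : \sum_j K i j * z 0 j = 0.
  rewrite (bigID (mem A)) /= [X in _ + X]big1 ?addr0 => [|j /z0 ->];
    last exact: mulr0.
  exact: sum_block_constant_mul.
split=> [i iA|]; first by rewrite mxE Kz z0 // mulr0 addr0.
rewrite -[RHS](sum_block_constant_mul cd sz); apply: eq_bigr => i _.
by rewrite mxE Kz addr0.
Qed.

Lemma block_constant_block_operator A :
  block_constant A d -> (forall j, block_constant A (K ^~ j)) ->
  forall z, block_constant A (z 0) -> block_constant A (block_operator d K z 0).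
Proof.
move=> cd cK z cz i i' e; rewrite !mxE (cd i i' e) (cz i i' e).
by congr (_ + _); apply: eq_bigr => j _; rewrite (cK j i i' e).
Qed.

End BlockOperator.

End TwoBlocks.

Section SignPattern.
Variables (R : realType) (n : nat) (beta lp : R) (s : 'I_n -> R).

Lemma Kstar_block_constant_row i : block_constant (Splus s) (Kstar beta lp s i).
Proof. by move=> j j' e; rewrite /Kstar e. Qed.

Lemma Kstar_block_constant_col j :
  block_constant (Splus s) (Kstar beta lp s ^~ j).
Proof. by move=> i i' e; rewrite /Kstar e. Qed.

Lemma Lk_block_operator lk :
  Lk beta lp s lk =
  block_operator (fun i => - gammaA beta lp s i)
                 (fun i j => lk * Kstar beta lp s i j).
Proof.
apply/funext => z; apply/rowP => i; rewrite !mxE mulr_sumr.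
by congr (_ + _); apply: eq_bigr => j _; rewrite mulrA.
Qed.

Hypothesis hs : forall i, s i = 1 \/ s i = -1.

Lemma Sminus_setC : Sminus s = ~: Splus s.
Proof.
apply/setP => i; rewrite !inE.
by case: (hs i) => ->; rewrite ?[1 == -1]eq_sym eqNr oner_eq0 eqxx.
Qed.

Lemma s_block_constant : block_constant (Splus s) s.
Proof.
move=> i j; rewrite !inE.
case: (hs i) (hs j) => -> [] ->;
  by rewrite ?[1 == -1]eq_sym ?eqNr ?oner_eq0 ?eqxx.
Qed.

Lemma gammaA_block_constant : block_constant (Splus s) (gammaA beta lp s).
Proof.
move=> i i' e; rewrite /gammaA (s_block_constant e); congr (_ * _).
by apply: eq_bigr => j _; rewrite (Kstar_block_constant_col j e).
Qed.

Lemma Vplus_zero_sum : Vplus s = zero_sum_on (Splus s).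
Proof.
apply/funext => z; apply/propext; rewrite /Vplus /zero_sum_on Sminus_setC.
by split=> -[z0 sz]; split=> // i iA; apply: z0; rewrite !inE in iA *.
Qed.

Lemma Vminus_zero_sum : Vminus s = zero_sum_on (~: Splus s).
Proof.
apply/funext => z; apply/propext; rewrite /Vminus /zero_sum_on Sminus_setC.
by split=> -[z0 sz]; split=> // i iA; apply: z0; rewrite !inE ?negbK in iA *.
Qed.

Lemma Vmean_block_constant : Vmean s = fun z => block_constant (Splus s) (z 0).
Proof.
apply/funext => z; apply/propext; rewrite /Vmean Sminus_setC.
split=> [[cP cM] i j|cz]; last first.
  split=> i j iA jA; apply: cz; first by rewrite iA jA.
  by move: iA jA; rewrite !finset.in_setC => /negbTE-> /negbTE->.
case: (boolP (i \in Splus s)) => iA; case: (boolP (j \in Splus s)) => jA //= _.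
  exact: cP.
by apply: cM; rewrite finset.in_setC.
Qed.

End SignPattern.

Theorem lemmaA2 (R : realType) (n : nat) (beta lp lk : R) (s : 'I_n -> R)
  (hbeta : 0 < beta)
  (hs : forall i, s i = 1 \/ s i = -1)
  (hnc : exists i j, s i = 1 /\ s j = -1) :
  direct_sum3 (Vplus s) (Vminus s) (Vmean s) /\
  (forall z, Vplus s z -> Vplus s (Lk beta lp s lk z)) /\
  (forall z, Vminus s z -> Vminus s (Lk beta lp s lk z)) /\
  (forall z, Vmean s z -> Vmean s (Lk beta lp s lk z)).
Proof.
rewrite (Vplus_zero_sum hs) (Vminus_zero_sum hs) (Vmean_block_constant hs).
rewrite Lk_block_operator.
have cd : block_constant (Splus s) (fun i => - gammaA beta lp s i).
  by move=> i i' e; congr (- _); exact: gammaA_block_constant.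
have cK i : block_constant (Splus s) (fun j => lk * Kstar beta lp s i j).
  by move=> j j' e; congr (_ * _); exact: Kstar_block_constant_row.
have cK' j : block_constant (Splus s) (fun i => lk * Kstar beta lp s i j).
  by move=> i i' e; congr (_ * _); exact: Kstar_block_constant_col.
split; [split|split; [|split]].
- exact: block_decomposition.
- exact: block_decomposition_unique.
- exact: zero_sum_on_block_operator cd cK.
- apply: zero_sum_on_block_operator (block_constantC cd) _ => i.
  exact: block_constantC.
- exact: block_constant_block_operator cd cK'.
Qed.
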